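(* Let $\mathcal{H}$ be a Hilbert space and let $f,g$ be holomorphic mappings from $\mathbb{C}^n$ to $\mathcal{H}$. Put $r(z,\overline w)=\langle f(z),f(w)\rangle-\langle g(z),g(w)\rangle$. Then the inequality $r(z,\overline z)\,r(w,\overline w)\ge |r(z,\overline w)|^2$ holds for all $z,w\in\mathbb{C}^n$ if and only if for every pair of points $z,w\in\mathbb{C}^n$, $$\|f(z)\otimes g(w)-f(w)\otimes g(z)\|^2\le \|f(z)\|^2\|f(w)\|^2-|\langle f(z),f(w)\rangle|^2+\|g(z)\|^2\|g(w)\|^2-|\langle g(z),g(w)\rangle|^2,$$ where the norm on the left is that of the Hilbert space tensor product $\mathcal{H}\otimes\mathcal{H}$.
   Context: The inner product on $\mathcal{H}\otimes\mathcal{H}$ satisfies $\langle u_1\otimes v_1,u_2\otimes v_2\rangle=\langle u_1,u_2\rangle\langle v_1,v_2\rangle$. *)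

From HB Require Import structures.
From mathcomp Require Import all_boot all_order all_algebra.
From mathcomp Require Import reals.
From mathcomp Require Import complex.
Set Implicit Arguments. Unset Strict Implicit. Unset Printing Implicit Defensive.
Import Order.TTheory GRing.Theory Num.Theory.
Local Open Scope ring_scope.

(* Complex numbers are modelled as R[i] = complex R for R : realType.
   Inner products are linear in the first argument and conjugate-linear in
   the second (so that <f(z), f(w)> is holomorphic in z). *)

Section Defs.
Variable R : realType.
Local Notation C := R[i].

Definition is_inner_product (V : lmodType C) (ip : V -> V -> C) : Prop :=
  [/\ forall (a : C) (u v w : V), ip (a *: u + v) w = a * ip u w + ip v w,
      forall u v : V, ip v u = Num.conj (ip u v),
      forall u : V, 0 <= ip u u
    & forall u : V, ip u u = 0 -> u = 0].

Definition ip_complete (V : lmodType C) (ip : V -> V -> C) : Prop :=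
  forall s : nat -> V,
    (forall eps : C, 0 < eps -> exists N : nat, forall m k : nat,
        (N <= m)%N -> (N <= k)%N -> ip (s m - s k) (s m - s k) < eps) ->
    exists l : V, forall eps : C, 0 < eps -> exists N : nat, forall m : nat,
        (N <= m)%N -> ip (s m - l) (s m - l) < eps.

Definition hilbert_space (V : lmodType C) (ip : V -> V -> C) : Prop :=
  is_inner_product ip /\ ip_complete ip.

Definition hilbert_tensor_product (H : lmodType C) (ip : H -> H -> C)
    (K : lmodType C) (ipK : K -> K -> C) (tens : H -> H -> K) : Prop :=
  [/\ hilbert_space ipK,
      forall (a : C) (u u' v : H), tens (a *: u + u') v = a *: tens u v + tens u' v,
      forall (a : C) (u v v' : H), tens u (a *: v + v') = a *: tens u v + tens u v',
      forall u1 v1 u2 v2 : H, ipK (tens u1 v1) (tens u2 v2) = ip u1 u2 * ip v1 v2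
    & forall (x : K) (eps : C), 0 < eps -> exists s : seq (H * H),
        let y := x - \sum_(p <- s) tens p.1 p.2 in ipK y y < eps].

Definition cnormsq (n : nat) (h : 'rV[C]_n) : C := \sum_(i < n) `|h 0 i| ^+ 2.

Definition holomorphic (n : nat) (V : lmodType C) (ip : V -> V -> C)
    (f : 'rV[C]_n -> V) : Prop :=
  forall z : 'rV[C]_n, exists v : 'I_n -> V,
    forall eps : C, 0 < eps -> exists delta : C, 0 < delta /\
      forall h : 'rV[C]_n, cnormsq h < delta ->
        let e := f (z + h) - f z - \sum_(i < n) h 0 i *: v i in
        ip e e <= eps * cnormsq h.

End Defs.

From HB Require Import structures.
From mathcomp Require Import all_boot all_order all_algebra.
From mathcomp Require Import reals.
From mathcomp Require Import complex.
From mathcomp Require Import ring.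
Import Order.TTheory GRing.Theory Num.Theory.
Local Open Scope ring_scope.

(* Writing a = f z, b = f w, c = g z, d = g w and expanding the inner product
   of t = a (x) d - b (x) c with the product rule gives the pointwise identity
     r(z,z) r(w,w) - |r(z,w)|^2
       = (|a|^2|b|^2 - |<a,b>|^2) + (|c|^2|d|^2 - |<c,d>|^2) - |t|^2,
   so the two inequalities are the same statement. *)

Section InnerProduct.
Context {R : realType} {V : lmodType R[i]} {ip : V -> V -> R[i]}.
Hypothesis ip_inner : is_inner_product ip.

Lemma ipBl (u v w : V) : ip (u - v) w = ip u w - ip v w.
Proof.
case: ip_inner => linl _ _ _.
by rewrite -scaleN1r addrC linl mulN1r addrC.
Qed.

Lemma ip_conj (u v : V) : (ip u v)^* = ip v u.
Proof. by case: ip_inner => _ sym _ _; rewrite sym conjCK. Qed.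

Lemma ipBr (u v w : V) : ip w (u - v) = ip w u - ip w v.
Proof.
case: (ip_inner) => _ sym _ _.
by rewrite [ip w u]sym [ip w v]sym sym ipBl rmorphB.
Qed.

End InnerProduct.

Lemma tensor_gram_defect {R : realType} {H : lmodType R[i]} {ip : H -> H -> R[i]}
    {K : lmodType R[i]} {ipK : K -> K -> R[i]} {tens : H -> H -> K} :
  is_inner_product ip -> is_inner_product ipK ->
  (forall u1 v1 u2 v2, ipK (tens u1 v1) (tens u2 v2) = ip u1 u2 * ip v1 v2) ->
  forall a b c d : H,
  let t := tens a d - tens b c in
  (ip a a - ip c c) * (ip b b - ip d d) - `|ip a b - ip c d| ^+ 2 =
    (ip a a * ip b b - `|ip a b| ^+ 2 + (ip c c * ip d d - `|ip c d| ^+ 2))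
    - ipK t t.
Proof.
move=> ip_inner ipK_inner ip_tens a b c d t.
rewrite /t !normCK rmorphB /= !(ip_conj ip_inner).
rewrite !(ipBl ipK_inner) !(ipBr ipK_inner) !ip_tens.
ring.
Qed.

Theorem proposition7p1 (R : realType) (n : nat)
    (H : lmodType R[i]) (ip : H -> H -> R[i])
    (K : lmodType R[i]) (ipK : K -> K -> R[i]) (tens : H -> H -> K)
    (f g : 'rV[R[i]]_n -> H) :
  hilbert_space ip ->
  hilbert_tensor_product ip ipK tens ->
  holomorphic ip f -> holomorphic ip g ->
  let r := fun z w => ip (f z) (f w) - ip (g z) (g w) in
  (forall z w : 'rV[R[i]]_n, `|r z w| ^+ 2 <= r z z * r w w) <->
  (forall z w : 'rV[R[i]]_n,
     let t := tens (f z) (g w) - tens (f w) (g z) in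
     ipK t t <=
       ip (f z) (f z) * ip (f w) (f w) - `|ip (f z) (f w)| ^+ 2
     + (ip (g z) (g z) * ip (g w) (g w) - `|ip (g z) (g w)| ^+ 2)).
Proof.
move=> [ip_inner _] [[ipK_inner _] _ _ ip_tens _] _ _ r.
have defect (z w : 'rV_n) := tensor_gram_defect ip_inner ipK_inner ip_tens
  (f z) (f w) (g z) (g w).
split=> le z w /=; rewrite /r -subr_ge0.
- by rewrite -defect subr_ge0; apply: le.
- by rewrite defect subr_ge0; apply: le.
Qed.
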